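(* Let $r>5$ with $r\not\equiv 0\pmod 3$, and let $C_r$ be the directed cycle of length $r$. Then $3\leq\chi^*_o(C_r)\leq 4$.
   Context: The directed cycle $C_r$ has vertices $u_i$, $i\in\mathbb{Z}/r\mathbb{Z}$, and arcs $u_iu_{i+1}$. For a set $S$ of $k$ colors, a $b$-fold oriented $k$-coloring of an oriented graph $G$ is a map $f$ from $V(G)$ to the $b$-element subsets of $S$ such that (i) $f(x)\cap f(y)=\emptyset$ for every arc $xy$, and (ii) for all arcs $xy, zw$, $f(x)\cap f(w)\neq\emptyset$ implies $f(y)\cap f(z)=\emptyset$. $\chi^b_o(G)$ is the minimum such $k$, and $\chi^*_o(G)=\lim_{b\to\infty}\chi^b_o(G)/b=\inf_{b\ge1}\chi^b_o(G)/b$. *)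

From HB Require Import structures.
From mathcomp Require Import all_boot all_order all_algebra.
From mathcomp Require Import classical_sets reals.
Set Implicit Arguments. Unset Strict Implicit. Unset Printing Implicit Defensive.
Import Order.TTheory GRing.Theory Num.Theory.

Local Open Scope ring_scope.

Definition is_bfold_oriented_coloring (T : finType) (arc : rel T)
    (b k : nat) (f : T -> {set 'I_k}) : Prop :=
  (forall x, #|f x| = b) /\
  (forall x y, arc x y -> (f x :&: f y == finset.set0)) /\
  (forall x y z w, arc x y -> arc z w ->
      (f x :&: f w != finset.set0) -> (f y :&: f z == finset.set0)).

Definition chi_o_b (R : realType) (T : finType) (arc : rel T) (b : nat) : R :=
  inf [set (k%:R : R) | k in [set k : nat |
         exists f : T -> {set 'I_k}, @is_bfold_oriented_coloring T arc b k f]]%classic.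

Definition chi_o_frac (R : realType) (T : finType) (arc : rel T) : R :=
  inf [set chi_o_b R arc b / b%:R | b in [set b : nat | (1 <= b)%N]]%classic.

Definition dcycle_arc (r : nat) : rel 'I_r :=
  fun x y => nat_of_ord y == (x.+1 %% r)%N.

From HB Require Import structures.
From mathcomp Require Import all_boot all_order all_algebra.
From mathcomp Require Import classical_sets reals.
From mathcomp Require Import zify.

Set Implicit Arguments.
Unset Strict Implicit.
Unset Printing Implicit Defensive.
Import Order.TTheory GRing.Theory Num.Theory.
Local Open Scope ring_scope.

(* Lower bound: on a directed path x -> y -> z, condition (ii) applied to the
   arcs xy and yz forces f x and f z to be disjoint (otherwise f y would be
   disjoint from itself), so f x, f y, f z are three disjoint b-sets.
   Upper bound: when r = 3p + 4q, walking p times around a directed triangle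
   and then q times around a directed 4-cycle sharing two of its arcs is a
   homomorphism from C_r to a 4-vertex oriented graph; giving each target
   vertex b private colours yields a b-fold oriented 4b-coloring of C_r. *)

Definition oriented_rel (U : Type) (E : rel U) : Prop :=
  forall u v, E u v -> ~~ E v u.

Section BfoldColorings.
Variables (T : finType) (arc : rel T).

Lemma bfold_coloring_dipath_card b k (f : T -> {set 'I_k}) x y z :
  arc x y -> arc y z -> is_bfold_oriented_coloring arc b f -> (3 * b <= k)%N.
Proof.
move=> axy ayz [card_f [arc_disj arc_cond]].
have [-> | b_gt0] := posnP b; first by [].
have dxz : f x :&: f z == finset.set0.
  apply/negPn/negP => /(arc_cond _ _ _ _ axy ayz); rewrite finset.setIid => /eqP fy0.
  by move: (card_f y); rewrite fy0 cards0; lia.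
have := max_card (mem (f x :|: f y :|: f z)); rewrite card_ord.
rewrite cardsU cardsU finset.setIUl (eqP (arc_disj _ _ axy)) (eqP (arc_disj _ _ ayz)).
by rewrite (eqP dxz) finset.setU0 cards0 !card_f; lia.
Qed.

Lemma bfold_coloring_of_hom (U : finType) (E : rel U) (c : T -> U) b :
  oriented_rel E -> {homo c : x y / arc x y >-> E x y} ->
  exists f : T -> {set 'I_#|{: U * 'I_b}|}, is_bfold_oriented_coloring arc b f.
Proof.
move=> E_oriented c_hom.
pose f x := [set enum_rank (c x, j) | j : 'I_b].
have meet_f x y : f x :&: f y != finset.set0 -> c x = c y.
  case/set0Pn => i; rewrite inE => /andP[/imsetP[j _ ->] /imsetP[j' _]].
  by move/enum_rank_inj => [].
have E_irr u : ~~ E u u by apply/negP => Euu; move: (E_oriented _ _ Euu); rewrite Euu.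
exists f; split; [|split].
- move=> x; rewrite card_imset ?card_ord //.
  by move=> j j' /enum_rank_inj [].
- move=> x y axy; apply/negPn/negP => /meet_f cxy.
  by move: (E_irr (c x)); rewrite {2}cxy c_hom.
- move=> x y z w axy azw /meet_f cxw; apply/negPn/negP => /meet_f cyz.
  by move: (E_oriented _ _ (c_hom _ _ axy)); rewrite cxw cyz c_hom.
Qed.

Variable R : realType.

Lemma chi_o_b_le b k (f : T -> {set 'I_k}) :
  is_bfold_oriented_coloring arc b f -> chi_o_b R arc b <= k%:R.
Proof.
move=> f_col; apply: ge_inf; last by exists k => //; exists f.
by exists 0 => _ [j _ <-]; rewrite ler0n.
Qed.

Lemma chi_o_b_ge b m k0 (f0 : T -> {set 'I_k0}) :
  is_bfold_oriented_coloring arc b f0 ->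
  (forall k (f : T -> {set 'I_k}), is_bfold_oriented_coloring arc b f -> m <= k)%N ->
  m%:R <= chi_o_b R arc b.
Proof.
move=> f0_col m_le; apply: lb_le_inf; first by exists k0%:R; exists k0 => //; exists f0.
by move=> _ [k [f f_col] <-]; rewrite ler_nat (m_le _ f).
Qed.

Lemma chi_o_b_ge0 b : 0 <= chi_o_b R arc b.
Proof.
rewrite /chi_o_b; set S := [set _ | _ in _]%classic.
have [-> | /set0P S_ne] := eqVneq S set0; first by rewrite inf0.
apply: lb_le_inf => //.
by move=> _ [k _ <-]; rewrite ler0n.
Qed.

Lemma chi_o_frac_le b : (1 <= b)%N -> chi_o_frac R arc <= chi_o_b R arc b / b%:R.
Proof.
move=> b_gt0; apply: ge_inf; last by exists b.
by exists 0 => _ [j _ <-]; rewrite divr_ge0 ?chi_o_b_ge0.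
Qed.

Lemma chi_o_frac_ge m :
  (forall b, (1 <= b)%N -> m <= chi_o_b R arc b / b%:R) -> m <= chi_o_frac R arc.
Proof.
move=> m_le; apply: lb_le_inf; first by exists (chi_o_b R arc 1 / 1%:R); exists 1%N.
by move=> _ [b b_gt0 <-]; apply: m_le.
Qed.

End BfoldColorings.

Lemma dcycle_arc_succ r i (i_lt : (i.+1 < r)%N) :
  dcycle_arc (Ordinal (ltnW i_lt)) (Ordinal i_lt).
Proof. by rewrite /dcycle_arc /= modn_small. Qed.

(* The directed triangle 0 -> 1 -> 2 -> 0 glued to the directed 4-cycle
   0 -> 1 -> 2 -> 3 -> 0 along the path 0 -> 1 -> 2. *)
Definition tri_quad_nat (a b : nat) : bool :=
  [|| (a == 0) && (b == 1), (a == 1) && (b == 2), (a == 2) && (b == 0),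
      (a == 2) && (b == 3) | (a == 3) && (b == 0)]%N.

Definition tri_quad_arc : rel 'I_4 := fun a b => tri_quad_nat a b.

Lemma tri_quad_oriented : oriented_rel tri_quad_arc.
Proof. by move=> a b; rewrite /tri_quad_arc /tri_quad_nat; lia. Qed.

(* The first [s] vertices go around the triangle and the remaining
   [4 * (r %% 3)] around the 4-cycle; [s] is a multiple of 3, and the
   subtraction does not truncate because [r > 5] excludes [r = 5]. *)
Definition tri_quad_walk (r i : nat) : nat :=
  let s := (r - 4 * (r %% 3))%N in
  if (i < s)%N then (i %% 3)%N else ((i - s) %% 4)%N.

Lemma tri_quad_walk_lt r i : (tri_quad_walk r i < 4)%N.
Proof. by rewrite /tri_quad_walk; case: ifP; lia. Qed.

Lemma tri_quad_walk_step r i : (5 < r)%N -> (r %% 3 != 0)%N -> (i < r)%N ->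
  tri_quad_nat (tri_quad_walk r i) (tri_quad_walk r (i.+1 %% r)).
Proof.
move=> r_gt5 r_mod3 i_lt; rewrite /tri_quad_nat /tri_quad_walk.
have [i1_eq | i1_neq] := eqVneq i.+1 r.
  by rewrite i1_eq modnn; case: ifP; case: ifP; lia.
rewrite (@modn_small i.+1); last by lia.
by case: ifP; case: ifP; lia.
Qed.

Definition dcycle_tri_quad r (i : 'I_r) : 'I_4 := inord (tri_quad_walk r i).

Lemma dcycle_tri_quad_hom r : (5 < r)%N -> (r %% 3 != 0)%N ->
  {homo @dcycle_tri_quad r : x y / dcycle_arc x y >-> tri_quad_arc x y}.
Proof.
move=> r_gt5 r_mod3 x y; rewrite /dcycle_arc /tri_quad_arc /dcycle_tri_quad.
by rewrite !inordK ?tri_quad_walk_lt // => /eqP ->; apply: tri_quad_walk_step.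
Qed.

Theorem lemma1 (R : realType) (r : nat) :
  (5 < r)%N -> (r %% 3 != 0)%N ->
  3 <= chi_o_frac R (@dcycle_arc r) <= 4.
Proof.
move=> r_gt5 r_mod3.
have coloring b := bfold_coloring_of_hom b tri_quad_oriented
  (dcycle_tri_quad_hom r_gt5 r_mod3).
have r_gt2 : (2 < r)%N by lia.
have dipath b k (g : 'I_r -> {set 'I_k}) :=
  bfold_coloring_dipath_card (b := b) (f := g) (dcycle_arc_succ (ltnW r_gt2)) (dcycle_arc_succ r_gt2).
apply/andP; split.
- apply: chi_o_frac_ge => b b_gt0; rewrite ler_pdivlMr ?ltr0n // -natrM.
  have [f f_col] := coloring b.
  exact (chi_o_b_ge R f_col (dipath b)).
- apply: le_trans (chi_o_frac_le (@dcycle_arc r) R (leqnn 1)) _; rewrite divr1.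
  have [f f_col] := coloring 1%N.
  by apply: le_trans (chi_o_b_le R f_col) _; rewrite card_prod !card_ord.
Qed.
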